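(* Let $\mathcal D=\mathcal D(\Gamma,(g_i),(\chi_i),(a_{ij}))$ be a datum of finite Cartan type and $\lambda$ a family of linking parameters for $\mathcal D$. Assume one of the following: (1) the Cartan matrix $(a_{ij})$ is simply laced ($a_{ij}\in\{0,-1\}$ for all $i\ne j$) and $\operatorname{ord}(q_{ii})$ is odd for all $1\le i\le\theta$; or (2) $q_{ii}$ is not a root of unity for all $1\le i\le\theta$. Then the linking graph of $(\mathcal D,\lambda)$ is bipartite.
   Context: $k$ is an algebraically closed field of characteristic zero. A datum of finite Cartan type $\mathcal D=\mathcal D(\Gamma,(g_i)_{1\le i\le\theta},(\chi_i)_{1\le i\le\theta},(a_{ij})_{1\le i,j\le\theta})$ consists of an abelian group $\Gamma$, elements $g_i\in\Gamma$, characters $\chi_i:\Gamma\to k^\times$, and a Cartan matrix $(a_{ij})$ of finite type such that, with $q_{ij}=\chi_j(g_i)$, $q_{ij}q_{ji}=q_{ii}^{a_{ij}}$ and $q_{ii}\ne1$ for all $i,j$. Write $i\sim j$ if $i,j$ lie in the same connected component of the Dynkin diagram of $(a_{ij})$; let $\mathcal X$ be the set of connected components of $\{1,\dots,\theta\}$. A family of linking parameters is $\lambda=(\lambda_{ij})_{1\le i,j\le\theta,\,i\not\sim j}$ with $\lambda_{ij}\in k$, $\lambda_{ij}=0$ whenever $g_ig_j=1$ or $\chi_i\chi_j\ne\varepsilon$ (trivial character), and $\lambda_{ji}=-q_{ji}\lambda_{ij}$. Vertices $i,j$ are linkable if $i\not\sim j$, $g_ig_j\ne1$ and $\chi_i\chi_j=\varepsilon$;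 they are linked if moreover $\lambda_{ij}\ne0$. The linking graph of $(\mathcal D,\lambda)$ has vertex set $\mathcal X$, with an edge between $J_1,J_2\in\mathcal X$ iff there are $i\in J_1$, $j\in J_2$ that are linked. A graph is bipartite if its vertex set is a disjoint union of two subsets with no edge inside either subset. *)

From HB Require Import structures.
From mathcomp Require Import all_boot all_order all_algebra.
Set Implicit Arguments. Unset Strict Implicit. Unset Printing Implicit Defensive.
Import Order.TTheory GRing.Theory Num.Theory.
Local Open Scope ring_scope.

(* A character of the abelian group Γ (written additively as a zmodType)
   with values in k^× : a group homomorphism Γ -> k^×. *)
Definition is_character (G : zmodType) (k : fieldType) (chi : G -> k) : Prop :=
  (forall g, chi g != 0) /\ chi 0 = 1 /\ (forall a b, chi (a + b) = chi a * chi b).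

Definition is_cartan_matrix (n : nat) (A : 'M[int]_n) : Prop :=
  (forall i, A i i = 2%:Z) /\
  (forall i j, i != j -> A i j <= 0) /\
  (forall i j, (A i j == 0) = (A j i == 0)).

Definition principal_submx (n : nat) (A : 'M[int]_n) (S : {set 'I_n}) :
  'M[int]_#|S| :=
  mxsub (@enum_val _ (mem S)) (@enum_val _ (mem S)) A.

Definition finite_type_cartan (n : nat) (A : 'M[int]_n) : Prop :=
  is_cartan_matrix A /\ forall S : {set 'I_n}, 0 < \det (principal_submx A S).

Definition dynkin_adj (n : nat) (A : 'M[int]_n) : rel 'I_n :=
  [rel i j | (i != j) && (A i j != 0)].
Definition same_comp (n : nat) (A : 'M[int]_n) (i j : 'I_n) : bool :=
  connect (dynkin_adj A) i j.

Definition components (n : nat) (A : 'M[int]_n) : {set {set 'I_n}} :=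
  [set [set j | same_comp A i j] | i : 'I_n].

Definition q_of (G : zmodType) (k : fieldType) (n : nat)
  (g : 'I_n -> G) (chi : 'I_n -> G -> k) (i j : 'I_n) : k := chi j (g i).

Definition finite_cartan_datum (G : zmodType) (k : fieldType) (n : nat)
  (g : 'I_n -> G) (chi : 'I_n -> G -> k) (A : 'M[int]_n) : Prop :=
  (forall i, is_character (chi i)) /\ finite_type_cartan A /\
  (forall i j, q_of g chi i j * q_of g chi j i = q_of g chi i i ^ (A i j)) /\
  (forall i, q_of g chi i i != 1).

Definition char_prod_trivial (G : zmodType) (k : fieldType) (chi1 chi2 : G -> k) :=
  forall x, chi1 x * chi2 x = 1.

Definition linkable (G : zmodType) (k : fieldType) (n : nat)
  (g : 'I_n -> G) (chi : 'I_n -> G -> k) (A : 'M[int]_n) (i j : 'I_n) : Prop :=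
  ~~ same_comp A i j /\ g i + g j != 0 /\ char_prod_trivial (chi i) (chi j).

Definition linking_parameters (G : zmodType) (k : fieldType) (n : nat)
  (g : 'I_n -> G) (chi : 'I_n -> G -> k) (A : 'M[int]_n)
  (lam : 'I_n -> 'I_n -> k) : Prop :=
  forall i j, ~~ same_comp A i j ->
    ((g i + g j = 0 \/ ~ char_prod_trivial (chi i) (chi j)) -> lam i j = 0) /\
    lam j i = - (q_of g chi j i) * lam i j.

Definition linked (G : zmodType) (k : fieldType) (n : nat)
  (g : 'I_n -> G) (chi : 'I_n -> G -> k) (A : 'M[int]_n)
  (lam : 'I_n -> 'I_n -> k) (i j : 'I_n) : Prop :=
  linkable g chi A i j /\ lam i j != 0.

Definition linking_edge (G : zmodType) (k : fieldType) (n : nat)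
  (g : 'I_n -> G) (chi : 'I_n -> G -> k) (A : 'M[int]_n)
  (lam : 'I_n -> 'I_n -> k) (J1 J2 : {set 'I_n}) : Prop :=
  exists i j, [/\ i \in J1, j \in J2 & linked g chi A lam i j].

Definition bipartite (T : finType) (V : {set T}) (E : T -> T -> Prop) : Prop :=
  exists V1 V2 : {set T},
    [/\ V1 :|: V2 = V, [disjoint V1 & V2],
        (forall x y, x \in V1 -> y \in V1 -> ~ E x y) &
        (forall x y, x \in V2 -> y \in V2 -> ~ E x y)].

Definition linking_graph_bipartite (G : zmodType) (k : fieldType) (n : nat)
  (g : 'I_n -> G) (chi : 'I_n -> G -> k) (A : 'M[int]_n)
  (lam : 'I_n -> 'I_n -> k) : Prop :=
  bipartite (components A) (linking_edge g chi A lam).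

Definition simply_laced (n : nat) (A : 'M[int]_n) : Prop :=
  forall i j, i != j -> (A i j = 0) \/ (A i j = -1).

Definition odd_order (k : fieldType) (x : k) : Prop :=
  exists m : nat, odd m /\ m.-primitive_root x.

Definition not_root_of_unity (k : fieldType) (x : k) : Prop :=
  forall m : nat, (0 < m)%N -> x ^+ m != 1.

(* Linked vertices i, j lie in different Dynkin components, so a_ij = 0, and
   together with chi_i chi_j = eps this gives q_jj = q_ii^-1.  Along a Dynkin
   edge, q_ii^a_ij = q_jj^a_ji puts q_ii and q_jj in the same class of an
   equivalence relation on k^x that is stable under inversion: equality in the
   simply laced case, commensurability (x^a = y^b with a, b > 0) otherwise.
   Either hypothesis on the orders forbids q_ii to be related to q_ii^-1, so
   choosing one class out of each pair {C, C^-1} two-colours the components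
   with linked components coloured differently.  Neither the characteristic of
   k nor the axioms of the linking parameters play a role. *)

From mathcomp Require Import all_boot all_order all_algebra.
From Stdlib Require Import ClassicalEpsilon FunctionalExtensionality.
From Stdlib Require Import PropExtensionality ProofIrrelevance.
Local Open Scope ring_scope.
Import Order.TTheory GRing.Theory.

Section SignedColoring.

Context {T : Type} {inv : T -> T} {E : T -> T -> Prop}.
Hypothesis invK : involutive inv.
Hypothesis E_refl : forall x, E x x.
Hypothesis E_sym : forall x y, E x y -> E y x.
Hypothesis E_trans : forall x y z, E x y -> E y z -> E x z.
Hypothesis E_inv : forall x y, E x y -> E (inv x) (inv y).

Lemma signed_coloring : exists c : T -> bool,
  (forall x y, E x y -> c x = c y) /\
  (forall x, ~ E x (inv x) -> c (inv x) = ~~ c x).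
Proof.
(* rep x is a chosen element of the union of the classes of x and inv x; the
   colour of x records whether x lies in the class of its representative. *)
pose P x z := E z x \/ E z (inv x).
pose rep x := epsilon (inhabits x) (P x).
have rep_spec x : P x (rep x).
  by apply: epsilon_spec; exists x; left.
have rep_eq x y : (forall z, P x z <-> P y z) -> rep x = rep y.
  move=> Pxy; rewrite /rep (proof_irrelevance _ (inhabits x) (inhabits y)).
  congr epsilon; apply: functional_extensionality => z.
  exact: propositional_extensionality.
pose c x := if excluded_middle_informative (E (rep x) x) then true else false.
have cP x : c x <-> E (rep x) x.
  by rewrite /c; case: excluded_middle_informative.
exists c; split.
- move=> x y Exy; have rep_xy : rep x = rep y.
    by apply: rep_eq => z; split; case=> Ez; [left|right|left|right]; eauto.
  apply/idP/idP => /cP Er; apply/cP; [rewrite -rep_xy | rewrite rep_xy]; eauto.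
- move=> x Exx; have rep_inv : rep (inv x) = rep x.
    by apply: rep_eq => z; rewrite /P invK; tauto.
  apply/idP/idP => [/cP Er|/negP Er].
  + by apply/negP => /cP Er'; apply: Exx; rewrite rep_inv in Er; eauto.
  + apply/cP; rewrite rep_inv; case: (rep_spec x) => // Er'.
    by case: Er; apply/cP.
Qed.

End SignedColoring.

Lemma bipartite_of_coloring {T : finType} {V : {set T}} {E : T -> T -> Prop}
    (c : T -> bool) :
  (forall x y, x \in V -> y \in V -> E x y -> c x != c y) -> bipartite V E.
Proof.
move=> cE; exists [set x in V | c x], [set x in V | ~~ c x]; split.
- by apply/setP => x; rewrite !inE; case: (x \in V); case: (c x).
- rewrite disjoint_subset; apply/subsetP => x.
  by rewrite !inE => /andP[_ ->]; rewrite andbF.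
- move=> x y /setIdP[Vx cx] /setIdP[Vy cy] /(cE _ _ Vx Vy).
  by rewrite cx cy.
- move=> x y /setIdP[Vx /negbTE cx] /setIdP[Vy /negbTE cy] /(cE _ _ Vx Vy).
  by rewrite cx cy.
Qed.

Lemma connect_preserves {T : finType} {U : Type} {r : rel T} {f : T -> U}
    {R : U -> U -> Prop} :
  (forall u, R u u) -> (forall u v w, R u v -> R v w -> R u w) ->
  (forall x y, r x y -> R (f x) (f y)) ->
  forall x y, connect r x y -> R (f x) (f y).
Proof.
move=> R_refl R_trans rR x y /connectP[p]; elim: p x => [|z p IHp] x /=.
  by move=> _ ->.
by case/andP=> rxz /IHp zy /zy; apply: R_trans (rR _ _ rxz).
Qed.

Lemma exprz_neg {R : unitRingType} (x : R) {z : int} :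
  z < 0 -> exists2 m, (0 < m)%N & x ^ z = (x ^+ m)^-1.
Proof. by case: z => // m _; exists m.+1. Qed.

Lemma odd_order_inv_eq1 {k : fieldType} {x : k} :
  odd_order x -> x = x^-1 -> x = 1.
Proof.
case=> m [odd_m prim_x] xV; have m_gt0 := prim_order_gt0 prim_x.
have x_neq0 : x != 0.
  apply: contra_eq_neq (prim_expr_order prim_x) => ->.
  by rewrite expr0n gtn_eqF // eq_sym oner_neq0.
have m_dvd2 : (m %| 2)%N by rewrite (prim_order_dvd prim_x) expr2 {2}xV mulfV.
have m1 : m = 1%N by case: m m_gt0 odd_m m_dvd2 {prim_x} => [|[|[|m]]].
by have := prim_expr_order prim_x; rewrite m1 expr1.
Qed.

Definition commensurable {R : pzSemiRingType} (x y : R) : Prop :=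
  exists a b, [/\ (0 < a)%N, (0 < b)%N & x ^+ a = y ^+ b].

Section Commensurable.
Variable R : pzSemiRingType.
Implicit Types x y z : R.

Lemma commensurable_refl x : commensurable x x.
Proof. by exists 1%N, 1%N. Qed.

Lemma commensurable_sym x y : commensurable x y -> commensurable y x.
Proof. by case=> a [b [a_gt0 b_gt0 xy]]; exists b, a. Qed.

Lemma commensurable_trans x y z :
  commensurable x y -> commensurable y z -> commensurable x z.
Proof.
case=> a [b [a_gt0 b_gt0 xy]] [c [d [c_gt0 d_gt0 yz]]].
exists (a * c)%N, (d * b)%N; rewrite !muln_gt0 a_gt0 b_gt0 c_gt0 d_gt0.
by split=> //; rewrite exprM xy -exprM mulnC exprM yz -exprM.
Qed.

End Commensurable.

Lemma commensurableV (R : unitRingType) (x y : R) :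
  commensurable x y -> commensurable x^-1 y^-1.
Proof. by case=> a [b [a_gt0 b_gt0 xy]]; exists a, b; rewrite !exprVn xy. Qed.

Lemma not_root_of_unity_commensurableV {k : fieldType} {x : k} :
  x != 0 -> not_root_of_unity x -> ~ commensurable x x^-1.
Proof.
move=> x_neq0 x_nroot [a [b [a_gt0 _ xab]]].
have := x_nroot (a + b)%N; rewrite addn_gt0 a_gt0 exprD xab exprVn.
by rewrite mulVf ?expf_neq0 // eqxx => /(_ isT).
Qed.

Section CartanDatum.

Variables (k : fieldType) (G : zmodType) (n : nat).
Variables (g : 'I_n -> G) (chi : 'I_n -> G -> k) (A : 'M[int]_n).
Hypothesis datum : finite_cartan_datum g chi A.

Local Notation q i := (q_of g chi i i).

Lemma chi_neq0 i x : chi i x != 0.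
Proof. by case: datum => /(_ i)[]. Qed.

Lemma entry_eq0_of_not_same_comp i j : ~~ same_comp A i j -> A i j = 0.
Proof.
move=> not_ij; apply/eqP; apply: contraNT not_ij => Aij_neq0.
have [<-|i_neq_j] := eqVneq i j; first exact: connect0.
by apply: connect1; apply/andP.
Qed.

Lemma linked_q_inv (lam : 'I_n -> 'I_n -> k) i j :
  linked g chi A lam i j -> q j = (q i)^-1.
Proof.
case=> -[not_ij [_ chi_ij1]] _; case: datum => _ [_ [qq _]].
have := qq i j; rewrite entry_eq0_of_not_same_comp // expr0z => qij_qji1.
have qi_qij1 : q i * q_of g chi i j = 1 by apply: chi_ij1.
have qji_qj1 : q_of g chi j i * q j = 1 by apply: chi_ij1.
rewrite -[q j]mul1r -qij_qji1 -mulrA qji_qj1 mulr1.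
rewrite -[q_of _ _ i j]mul1r -(mulVf (chi_neq0 i (g i))).
by rewrite -mulrA qi_qij1 mulr1.
Qed.

Lemma dynkin_adj_q {i j} : dynkin_adj A i j ->
  [/\ A i j < 0, A j i < 0 & q i ^ A i j = q j ^ A j i].
Proof.
case/andP=> i_neq_j Aij_neq0; case: datum => _ [[[_ [Ale0 Asym]] _] [qq _]].
have Aji_neq0 : A j i != 0 by rewrite -Asym.
split; first by rewrite lt_neqAle Aij_neq0 Ale0.
  by rewrite lt_neqAle Aji_neq0 Ale0 // eq_sym.
by rewrite -qq -qq mulrC.
Qed.

Lemma bipartite_of_vertex_coloring (lam : 'I_n -> 'I_n -> k)
    (col : 'I_n -> bool) :
  (forall i j, same_comp A i j -> col i = col j) ->
  (forall i j, linked g chi A lam i j -> col i != col j) ->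
  linking_graph_bipartite g chi A lam.
Proof.
move=> col_comp col_linked.
have col_block J i :
    J \in components A -> i \in J -> [exists j in J, col j] = col i.
  case/imsetP=> i0 _ -> i0i; rewrite inE in i0i.
  apply/existsP/idP => [[j /andP[i0j colj]]|coli].
    by rewrite inE in i0j; rewrite -(col_comp _ _ i0i) (col_comp _ _ i0j).
  by exists i; rewrite inE i0i.
apply: (bipartite_of_coloring (fun J : {set 'I_n} => [exists j in J, col j])).
move=> J1 J2 J1_comp J2_comp [i [j [iJ1 jJ2 /col_linked]]].
by rewrite (col_block _ _ J1_comp iJ1) (col_block _ _ J2_comp jJ2).
Qed.

Lemma bipartite_of_q_invariant (lam : 'I_n -> 'I_n -> k) (E : k -> k -> Prop) :
  (forall x, E x x) -> (forall x y, E x y -> E y x) ->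
  (forall x y z, E x y -> E y z -> E x z) ->
  (forall x y, E x y -> E x^-1 y^-1) ->
  (forall i j, dynkin_adj A i j -> E (q i) (q j)) ->
  (forall i, ~ E (q i) (q i)^-1) ->
  linking_graph_bipartite g chi A lam.
Proof.
move=> E_refl E_sym E_trans E_inv E_adj E_qV.
have [c [cE cV]] := signed_coloring (@invrK k) E_refl E_sym E_trans E_inv.
apply: (@bipartite_of_vertex_coloring _ (fun i => c (q i))).
  move=> i j /(connect_preserves E_refl E_trans E_adj).
  exact: cE.
move=> i j /linked_q_inv ->; rewrite cV //.
by case: (c _).
Qed.

Lemma bipartite_of_simply_laced_odd_order (lam : 'I_n -> 'I_n -> k) :
  simply_laced A -> (forall i, odd_order (q i)) ->
  linking_graph_bipartite g chi A lam.
Proof.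
move=> laced odd_q; apply: (@bipartite_of_q_invariant _ eq) => //.
- exact: etrans.
- exact: congr1.
- move=> i j adj_ij; have [Aij_lt0 Aji_lt0 qij] := dynkin_adj_q adj_ij.
  have [i_neq_j _] := andP adj_ij.
  have Am1 l l' : l != l' -> A l l' < 0 -> A l l' = -1.
    by move=> /laced[->|//]; rewrite ltxx.
  have Aij : A i j = -1 by apply: Am1.
  have Aji : A j i = -1 by apply: Am1; rewrite // eq_sym.
  by move: qij; rewrite Aij Aji !exprN1; apply: invr_inj.
- move=> i /(odd_order_inv_eq1 (odd_q i)) qi1.
  by case: datum => _ [_ [_ /(_ i)]]; rewrite qi1 eqxx.
Qed.

Lemma bipartite_of_not_root_of_unity (lam : 'I_n -> 'I_n -> k) :
  (forall i, not_root_of_unity (q i)) -> linking_graph_bipartite g chi A lam.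
Proof.
move=> nroot_q.
apply: (@bipartite_of_q_invariant _ commensurable).
- exact: commensurable_refl.
- exact: commensurable_sym.
- exact: commensurable_trans.
- exact: commensurableV.
- move=> i j /dynkin_adj_q[Aij_lt0 Aji_lt0].
  have [a a_gt0 ->] := exprz_neg (q i) Aij_lt0.
  have [b b_gt0 ->] := exprz_neg (q j) Aji_lt0.
  by move/invr_inj => qab; exists a, b.
- move=> i; apply: not_root_of_unity_commensurableV (nroot_q i).
  exact: chi_neq0.
Qed.

End CartanDatum.

Theorem lemma3p2 (k : closedFieldType) (Hchar : [pchar k] =i pred0)
  (G : zmodType) (n : nat) (g : 'I_n -> G) (chi : 'I_n -> G -> k)
  (A : 'M[int]_n) (lam : 'I_n -> 'I_n -> k) :
  finite_cartan_datum g chi A ->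
  linking_parameters g chi A lam ->
  (simply_laced A /\ (forall i, odd_order (q_of g chi i i))) \/
  (forall i, not_root_of_unity (q_of g chi i i)) ->
  linking_graph_bipartite g chi A lam.
Proof.
move=> datum _ [[laced odd_q] | nroot_q].
- exact: bipartite_of_simply_laced_odd_order.
- exact: bipartite_of_not_root_of_unity.
Qed.
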